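(* Suppose $F_L$ is supported on $[0,\bar L)$ and $F_H$ is supported on $[\underline H,\infty)$, with $\bar L<\underline H$. Suppose $\alpha_i=1$ for at least two agents $i$. Let $r_L<r_H$. Then for every $\rho\in(\bar L,\underline H)$, the threshold mechanism ${\cal M}(\rho,r_L,r_H)$ is incentive compatible. That is, for each agent $i$, each type $s$ and each $v_i$ in the support of $F_s$, the truthful strategy of agent $i$ is a best response when all other agents bid truthfully.
   Context: Setting: a seller sells $T>1$ items, one per round $t=1,\dots,T$, to $n$ agents. All items share a type $s\in\{L,H\}$, which has prior probabilities $p_L,p_H$. The type $s$ is known to the agents but not to the seller. Conditional on $s$, agent $i$'s valuation $v_i$ is drawn independently from $F_s$ and is the same in all rounds. In each round, agent $i$ participates independently with probability $\alpha_i$ and learns this at the start of the round. $T$, $p_L$, $p_H$ and the $\alpha_i$ are common knowledge. Each agent knows only its own valuation. Each round runs a second price auction with reserve $r_t$ among the participants: if all bids are below $r_t$ there is no sale; otherwise a highest bidder (ties broken uniformly at random) wins and pays the maximum of $r_t$ and the highest other bid. A bidding strategy for agent $i$ maps $v_i$, the agent's own observed history (past reserves, own participation, bids, allocations, payments) and the current reserve to a bid. Agent $i$'s utility is $\mathbb{E}[\sum_t (v_iq_{it}-p_{it})]$. The truthful strategy bids $v_i$ whenever participating. A best response maximizes this utility given the others' strategies. The threshold mechanism ${\cal M}(\rho,r_L,r_H)$ works as follows. The reserve is $r_L$ in round 1 and stays $r_L$ until some agent bids above $\rho$ in some round. In all rounds after that, the reserve is $r_H$. If no bid ever exceeds $\rho$,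 the reserve stays $r_L$ until round $T$. *)

From HB Require Import structures.
From mathcomp Require Import all_boot all_order all_algebra all_fingroup.
From mathcomp Require Import all_classical all_reals all_analysis.
Set Implicit Arguments. Unset Strict Implicit. Unset Printing Implicit Defensive.
Import Order.TTheory GRing.Theory Num.Theory.
Import numFieldNormedType.Exports.
Local Open Scope classical_set_scope.
Local Open Scope ring_scope.

Inductive item_type := TL | TH.

Section Model.
Variable R : realType.
Variable n : nat.

Record obs := Obs {
  obs_reserve : R; obs_part : bool; obs_bid : option R;
  obs_alloc : bool; obs_pay : R }.

(* A bidding strategy of an agent: own valuation -> own observed history
   (past rounds, oldest first) -> current reserve -> bid.
   It is only consulted in rounds in which the agent participates. *)
Definition strategy := R -> seq obs -> R -> R.

Definition truthful : strategy := fun v _ _ => v.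

(* Bids of a round: None = agent does not participate. *)
Definition bids := 'I_n -> option R.

(* Second-price auction with reserve r; ties among the highest bidders are
   broken by the uniformly random priority permutation pi (lowest pi wins),
   which selects a uniformly random highest bidder. *)
Definition is_winner (r : R) (b : bids) (pi : {perm 'I_n}) (w : 'I_n) : bool :=
  match b w with
  | Some x => (r <= x) &&
      [forall j, match b j with
                 | Some y => (y < x) || ((y == x) && (pi w <= pi j)%N)
                 | None => true end]
  | None => false
  end.

Definition winner (r : R) (b : bids) (pi : {perm 'I_n}) : option 'I_n :=
  [pick w | is_winner r b pi w].

Definition payment (r : R) (b : bids) (w : 'I_n) : R :=
  \big[Num.max/r]_(j | j != w) (match b j with Some y => y | None => r end).

Definition exceeds (rho : R) (b : bids) : bool :=
  [exists j, match b j with Some y => rho < y | None => false end].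

(* Play of the threshold mechanism M(rho, rL, rH), where agent i uses
   strategy sigma and all other agents bid truthfully.
   part t j : does agent j participate in round t;  tie t : tie-breaking
   permutation of round t;  v : valuations.
   Returns (threshold already exceeded, history of agent i, utility of i). *)
Fixpoint play (rho rL rH : R) (i : 'I_n) (sigma : strategy) (v : 'I_n -> R)
  (part : nat -> 'I_n -> bool) (tie : nat -> {perm 'I_n}) (k : nat)
  : bool * seq obs * R :=
  match k with
  | 0 => (false, [::], 0)
  | k'.+1 =>
    let: (trig, h, u) := play rho rL rH i sigma v part tie k' in
    let r := if trig then rH else rL in
    let b : bids := fun j => if part k' j then
                     Some (if j == i then sigma (v i) h r else v j) else None in
    let q := winner r b (tie k') == Some i in
    let p := if q then payment r b i else 0 in
    (trig || exceeds rho b, rcons h (Obs r (part k' i) (b i) q p),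
     u + (if q then v i else 0) - p)
  end.

Definition ffun_nat (T : nat) (A : Type) (d : A) (f : {ffun 'I_T -> A}) : nat -> A :=
  fun t => if @insub nat (fun k => (k < T)%N) 'I_T t is Some t' then f t' else d.

(* Expected utility of agent i over participation (agent j participates in
   each round independently with prob. alpha j) and uniform tie-breaking,
   for fixed valuations v. *)
Definition exp_util_fin (T : nat) (alpha : 'I_n -> R) (rho rL rH : R)
  (i : 'I_n) (sigma : strategy) (v : 'I_n -> R) : R :=
  \sum_(a : {ffun 'I_T -> {ffun 'I_n -> bool}})
   \sum_(pi : {ffun 'I_T -> {perm 'I_n}})
     (\prod_(t < T) \prod_(j < n) (if a t j then alpha j else 1 - alpha j))
     * (#|{ffun 'I_T -> {perm 'I_n}}|%:R)^-1
     * (play rho rL rH i sigma v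
          (fun t j => ffun_nat [ffun=> false] a t j)
          (ffun_nat 1%g pi) T).2.

(* Iterated integral: integrates out the coordinates js of v, each w.r.t. mu
   (i.e. the expectation over independent mu-distributed coordinates). *)
Fixpoint iter_int (mu : {measure set R -> \bar R}) (js : seq 'I_n)
  (f : ('I_n -> R) -> \bar R) (v : 'I_n -> R) : \bar R :=
  match js with
  | [::] => f v
  | j :: js' => (\int[mu]_x iter_int mu js' f (fun k => if k == j then x else v k))%E
  end.

(* Interim expected utility of agent i with valuation vi when the others'
   valuations are i.i.d. with distribution mu and bid truthfully. *)
Definition exp_util (T : nat) (alpha : 'I_n -> R) (mu : {measure set R -> \bar R})
  (rho rL rH : R) (i : 'I_n) (vi : R) (sigma : strategy) : \bar R :=
  iter_int mu [seq j <- enum 'I_n | j != i]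
    (fun v => (exp_util_fin T alpha rho rL rH i sigma v)%:E) (fun=> vi).

End Model.

Definition msupport (R : realType) (mu : {measure set R -> \bar R}) : set R :=
  [set x | forall e : R, 0 < e -> (0 < mu (ball x e))%E].

From Pilot Require Import Defs.
From HB Require Import structures.
From mathcomp Require Import all_boot all_order all_algebra all_fingroup.
From mathcomp Require Import all_classical all_reals all_analysis.
From mathcomp Require Import measurable_realfun.
Set Implicit Arguments. Unset Strict Implicit. Unset Printing Implicit Defensive.
Import Order.TTheory GRing.Theory Num.Theory.
Import numFieldNormedType.Exports.
Local Open Scope classical_set_scope.
Local Open Scope ring_scope.
Import HBNNSimple.

(* In a round, bidder i gets at most max(0, v_i - p), where the payment p depends
   only on the reserve and the other bids, and truthful bidding attains this bound;
   moreover p is nondecreasing in the reserve.  So truthful bidding wins round by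
   round against any deviation that never faces a lower reserve.  For a low item
   every valuation is below rho, so truthful bidding never raises the reserve; for
   a high item some other agent with alpha = 1 bids above rho in the first round,
   so from round 2 on the reserve is r_H whatever i does. *)

(* No measurability is assumed: the integrands built from [play] are never shown
   measurable, so the library's monotonicity lemmas do not apply. *)
Section IntegralConull.
Context d (T : measurableType d) (R : realType) (mu : {measure set T -> \bar R}).
Variable S : set T.
Hypotheses (mS : measurable S) (muSC : mu (~` S) = 0%E).

Lemma ge0_le_integral_conull (f g : T -> \bar R) :
  (forall x, 0 <= f x)%E -> (forall x, 0 <= g x)%E ->
  (forall x, S x -> f x <= g x)%E -> (\int[mu]_x f x <= \int[mu]_x g x)%E.
Proof.
move=> f0 g0 fg; rewrite !ge0_integralTE//.
apply: ge_ereal_sup => _ [h /= hf <-].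
pose hS := proj_nnsfun h mS.
have -> : sintegral mu h = sintegral mu hS.
  rewrite -!integralT_nnsfun; apply: ae_eq_integral => //.
  - by apply/measurable_EFinP; exact: measurable_funP.
  - by apply/measurable_EFinP; exact: measurable_funP.
  - exists (~` S); split => //; first exact: measurableC.
    move=> x /= hx; apply: contra_not hx => Sx _.
    by rewrite /= mindicE mem_set// mulr1.
apply: ereal_sup_ubound; exists hS => // x /=.
rewrite mindicE; case: (boolP (x \in S)) => [/set_mem Sx|_].
  by rewrite mulr1; exact: le_trans (hf x) (fg x Sx).
by rewrite mulr0.
Qed.

Lemma le_integral_conull (f g : T -> \bar R) :
  (forall x, S x -> f x <= g x)%E -> (\int[mu]_x f x <= \int[mu]_x g x)%E.
Proof.
move=> fg; rewrite integralE [leRHS]integralE; apply: leeB.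
  apply: ge0_le_integral_conull; try by move=> x; exact: funepos_ge0.
  by move=> x Sx; rewrite !funeposE; apply: le_max2 => //; exact: fg.
apply: ge0_le_integral_conull; try by move=> x; exact: funeneg_ge0.
by move=> x Sx; rewrite !funenegE; apply: le_max2 => //; rewrite leeN2; exact: fg.
Qed.

End IntegralConull.

Lemma msupport_ubound (R : realType) (mu : {measure set R -> \bar R}) (S : set R)
  (b x : R) : measurable S -> mu (~` S) = 0%E -> (forall y, S y -> y <= b) ->
  msupport mu x -> x <= b.
Proof.
move=> mS muSC Sb xsupp; rewrite leNgt; apply/negP => bx.
have := xsupp (x - b); rewrite subr_gt0 => /(_ bx).
suff -> : mu (ball x (x - b)) = 0%E by rewrite ltxx.
apply: (subset_measure0 _ (measurableC mS)) => //; first exact: measurable_ball.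
move=> y; rewrite ball_itv /= in_itv /= opprB addrC subrK => /andP[bay _] Sy.
by have := Sb y Sy; rewrite leNgt bay.
Qed.

Lemma iter_int_le (R : realType) (n : nat) (mu : {measure set R -> \bar R})
  (S : set R) (js : seq 'I_n) (f g : ('I_n -> R) -> \bar R) (v : 'I_n -> R) :
  measurable S -> mu (~` S) = 0%E ->
  (forall w, (forall k, k \notin js -> w k = v k) -> (forall k, k \in js -> S (w k)) ->
     (f w <= g w)%E) ->
  (iter_int mu js f v <= iter_int mu js g v)%E.
Proof.
move=> mS muSC; elim: js v => [|j js IH] v fg /=; first exact: fg.
apply: (le_integral_conull mS muSC) => x Sx; apply: IH => w wv wS.
apply: fg => k; rewrite in_cons.
- by rewrite negb_or => /andP[kj /wv ->]; rewrite (negbTE kj).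
- case/orP => [/eqP->|/wS //].
  by case: (boolP (j \in js)) => [/wS //|/wv ->]; rewrite eqxx.
Qed.

Section SecondPriceAuction.
Variables (R : realType) (n : nat) (i : 'I_n).
Implicit Types (r x vi : R) (b : bids R n) (pi : {perm 'I_n}).

Lemma payment_ge_reserve r b : r <= payment r b i.
Proof.
rewrite /payment; apply: (big_rec (fun x => r <= x)) => // j x _ rx.
by rewrite le_max rx orbT.
Qed.

Lemma payment_ge_bid r b j y : j != i -> b j = Some y -> y <= payment r b i.
Proof. by move=> ji bj; rewrite /payment (bigD1 j) //= bj le_max lexx. Qed.

Lemma payment_le r b M : r <= M ->
  (forall j y, j != i -> b j = Some y -> y <= M) -> payment r b i <= M.
Proof.
move=> rM bM; rewrite /payment; elim/big_ind: _ => //.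
  by move=> x y xM yM; rewrite ge_max xM.
by move=> j ji; case bj: (b j) => [y|] //; exact: bM bj.
Qed.

Lemma le_payment r1 r2 b1 b2 : r1 <= r2 ->
  (forall j, j != i -> b1 j = b2 j) -> payment r1 b1 i <= payment r2 b2 i.
Proof.
move=> r12 b12; rewrite /payment; elim/big_ind2: _ => //.
  by move=> *; exact: le_max2.
by move=> j ji; rewrite b12 //; case: (b2 j).
Qed.

Lemma winnerP r b pi w : winner r b pi = Some w -> is_winner r b pi w.
Proof. by rewrite /winner; case: pickP => // x wx [<-]. Qed.

Lemma winner_absent r b pi : b i = None -> winner r b pi != Some i.
Proof. by move=> bi; apply/negP => /eqP/winnerP; rewrite /is_winner bi. Qed.

Lemma payment_le_winning_bid r b pi x :
  b i = Some x -> winner r b pi = Some i -> payment r b i <= x.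
Proof.
move=> bi /winnerP; rewrite /is_winner bi => /andP[rx /forallP others].
apply: payment_le => // j y ji bj; move: (others j); rewrite bj.
by case/orP => [/ltW //|/andP[/eqP -> _]].
Qed.

Lemma winner_bid_gt_payment r b pi x :
  b i = Some x -> payment r b i < x -> winner r b pi = Some i.
Proof.
move=> bi px.
have above_others j y : j != i -> b j = Some y -> y < x.
  by move=> ji bj; exact: le_lt_trans (payment_ge_bid r ji bj) px.
have iwins : is_winner r b pi i.
  rewrite /is_winner bi (ltW (le_lt_trans (payment_ge_reserve r b) px)) /=.
  apply/forallP => j; case: (eqVneq j i) => [->|ji]; first by rewrite bi eqxx leqnn orbT.
  by case bj: (b j) => [y|] //; rewrite (above_others j y).
rewrite /winner; case: pickP => [w|/(_ i)]; last by rewrite iwins.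
case: (eqVneq w i) => [-> //|wi]; rewrite /is_winner.
case bw: (b w) => [y|] // /andP[_ /forallP /(_ i)]; rewrite bi.
have yx := above_others w y wi bw.
case/orP => [xy|/andP[/eqP xy _]]; first by have := lt_trans xy yx; rewrite ltxx.
by rewrite xy ltxx in yx.
Qed.

Definition round_util r b pi vi :=
  (if winner r b pi == Some i then vi else 0) -
  (if winner r b pi == Some i then payment r b i else 0).

Lemma round_util_le_surplus r b pi vi :
  round_util r b pi vi <= Num.max 0 (vi - payment r b i).
Proof.
rewrite /round_util; case: ifP => _; last by rewrite subrr le_max lexx.
by rewrite le_max lexx orbT.
Qed.

Lemma round_util_truthful r b pi vi : b i = Some vi ->
  round_util r b pi vi = Num.max 0 (vi - payment r b i).
Proof.
move=> bi; rewrite /round_util; case: ifP => [/eqP win|/eqP lose].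
  by rewrite max_r // subr_ge0 (payment_le_winning_bid bi win).
rewrite subrr max_l // subr_le0 leNgt; apply/negP.
by move/(winner_bid_gt_payment pi bi).
Qed.

Lemma round_util_le_truthful r1 r2 b1 b2 pi vi (p : bool) x :
  r1 <= r2 -> (forall j, j != i -> b1 j = b2 j) ->
  b1 i = (if p then Some vi else None) -> b2 i = (if p then Some x else None) ->
  round_util r2 b2 pi vi <= round_util r1 b1 pi vi.
Proof.
move=> r12 b12; case: p => b1i b2i.
  rewrite (round_util_truthful _ _ b1i).
  apply: le_trans (round_util_le_surplus _ _ _ _) _.
  by apply: le_max2 => //; apply: lerB => //; exact: le_payment.
by rewrite /round_util !(negbTE (winner_absent _ _ _)).
Qed.

End SecondPriceAuction.

Section ThresholdPlay.
Variables (R : realType) (n : nat) (i : 'I_n) (rho rL rH : R) (v : 'I_n -> R).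
Variables (part : nat -> 'I_n -> bool) (tie : nat -> {perm 'I_n}).

Local Notation play sigma k := (play rho rL rH i sigma v part tie k).

Lemma play_triggeredS (sigma : strategy R) k : (play sigma k.+1).1.1 =
  (play sigma k).1.1 ||
  exceeds rho (fun j => if part k j then
    Some (if j == i then sigma (v i) (play sigma k).1.2
                           (if (play sigma k).1.1 then rH else rL)
          else v j) else None).
Proof. by rewrite /=; case: Defs.play => [[]]. Qed.

Lemma truthful_never_triggers k : (forall j, v j <= rho) -> ~~ (play (@truthful R) k).1.1.
Proof.
move=> v_rho; elim: k => // k IH; rewrite play_triggeredS (negbTE IH) /=.
apply/existsPn => j; case: (part k j) => //.
by case: (j == i); rewrite /truthful -leNgt.
Qed.

Lemma play_triggered_after_first_round (sigma : strategy R) j k :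
  j != i -> part 0 j -> rho < v j -> (0 < k)%N -> (play sigma k).1.1.
Proof.
move=> ji pj rho_vj; elim: k => // -[_ _|k IH _]; rewrite play_triggeredS.
  by apply/orP; right; apply/existsP; exists j; rewrite pj (negbTE ji).
by rewrite IH.
Qed.

Lemma play_util_le_truthful (sigma : strategy R) : rL <= rH ->
  (forall k, (play (@truthful R) k).1.1 -> (play sigma k).1.1) ->
  forall k, (play sigma k).2 <= (play (@truthful R) k).2.
Proof.
move=> rLH trig_le; elim=> [|k IH] //=; move: IH (trig_le k) => /=.
case: (Defs.play _ _ _ _ sigma _ _ _ k) => [[trig h] u].
case: (Defs.play _ _ _ _ (@truthful R) _ _ _ k) => [[trig' h'] u'] /= IH trig_le'.
rewrite -!addrA; apply: lerD => //.
apply: (@round_util_le_truthful _ _ i _ _ _ _ _ _ (part k i)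
         (sigma (v i) h (if trig then rH else rL))).
- by case: trig trig_le'; case: trig' => // /(_ isT).
- by move=> j ji /=; rewrite (negbTE ji).
- by rewrite eqxx.
- by rewrite eqxx.
Qed.

End ThresholdPlay.

Lemma ffun_nat_lt (T : nat) (A : Type) (d : A) (f : {ffun 'I_T -> A}) t (tT : (t < T)%N) :
  ffun_nat d f t = f (Ordinal tT).
Proof. by rewrite /ffun_nat insubT. Qed.

Section ExpectedUtility.
Variables (R : realType) (n T : nat) (alpha : 'I_n -> R) (rho rL rH : R) (i : 'I_n).
Variables (sigma : strategy R) (v : 'I_n -> R).
Hypotheses (rLH : rL <= rH) (alpha01 : forall j, 0 <= alpha j <= 1).

Local Notation triggered s part tie k := (play rho rL rH i s v part tie k).1.1.
Local Notation EU s := (exp_util_fin T alpha rho rL rH i s v).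

(* A play in which an agent with [alpha j = 1] sits out a round has weight 0, so
   trigger dominance is only needed on plays where all such agents participate. *)
Lemma exp_util_fin_le_truthful :
  (forall (part : nat -> 'I_n -> bool) (tie : nat -> {perm 'I_n}),
     (forall t j, (t < T)%N -> alpha j = 1 -> part t j) ->
     forall k, triggered (@truthful R) part tie k -> triggered sigma part tie k) ->
  EU sigma <= EU (@truthful R).
Proof.
move=> trig_le; apply: ler_sum => a _; apply: ler_sum => pi _.
set w := \prod_(t < T) _.
have w0 : 0 <= w.
  apply: prodr_ge0 => t _; apply: prodr_ge0 => j _.
  by have /andP[a0 a1] := alpha01 j; case: ifP; rewrite ?subr_ge0.
case: (pickP (fun tj : 'I_T * 'I_n => ~~ a tj.1 tj.2 && (alpha tj.2 == 1))).
  move=> [t j] /andP[/negbTE atj /eqP aj1].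
  by rewrite /w (bigD1 t) //= (bigD1 j) //= atj aj1 subrr !mul0r.
move=> sure; apply: ler_wpM2l; first by rewrite mulr_ge0 ?invr_ge0.
apply: play_util_le_truthful => //; apply: trig_le => t j tT aj1.
rewrite ffun_nat_lt; apply: contraT => atj.
by have := sure (Ordinal tT, j); rewrite /= atj aj1 eqxx.
Qed.

Lemma exp_util_fin_le_truthful_low : (forall j, v j <= rho) ->
  EU sigma <= EU (@truthful R).
Proof.
move=> v_rho; apply: exp_util_fin_le_truthful => part tie _ k.
by rewrite (negbTE (truthful_never_triggers i rL rH part tie k v_rho)).
Qed.

Lemma exp_util_fin_le_truthful_high j : (0 < T)%N -> j != i -> alpha j = 1 -> rho < v j ->
  EU sigma <= EU (@truthful R).
Proof.
move=> T0 ji aj1 rho_vj; apply: exp_util_fin_le_truthful => part tie sure [|k] // _.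
exact: play_triggered_after_first_round ji (sure 0 j T0 aj1) rho_vj _.
Qed.

End ExpectedUtility.

Theorem proposition1 (R : realType) (n T : nat) (alpha : 'I_n -> R)
  (FL FH : probability R R) (Lbar Hund rL rH : R) :
  (1 < T)%N ->
  (forall j, 0 <= alpha j <= 1) ->
  (exists j k : 'I_n, j != k /\ alpha j = 1 /\ alpha k = 1) ->
  FL [set` `[0, Lbar[] = 1%E ->
  FH [set` `[Hund, +oo[] = 1%E ->
  Lbar < Hund ->
  rL < rH ->
  forall rho : R, Lbar < rho < Hund ->
  forall (s : item_type) (i : 'I_n) (vi : R),
    let F := if s is TL then FL else FH in
    msupport F vi ->
    forall sigma : strategy R,
      (exp_util T alpha F rho rL rH i vi sigma
        <= exp_util T alpha F rho rL rH i vi (@truthful R))%E.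
Proof.
move=> T1 alpha01 [j1 [k1 [jk [aj1 ak1]]]] FL1 FH1 _ /ltW rLH rho /andP[Lrho rhoH].
move=> s i vi F vi_supp sigma.
have others k : (k \in [seq j <- enum 'I_n | j != i]) = (k != i).
  by rewrite mem_filter mem_enum andbT.
have conull (mu : probability R R) S : measurable S -> mu S = 1%E -> mu (~` S) = 0%E.
  by move=> mS muS1; rewrite probability_setC // muS1 subee.
case: s @F vi_supp => F vi_supp.
- have FS := conull F _ (measurable_itv _) FL1.
  have viL : vi <= Lbar.
    apply: msupport_ubound (measurable_itv _) FS _ vi_supp => y.
    by rewrite /= in_itv => /andP[_ /ltW].
  apply: iter_int_le (measurable_itv _) FS _ => w wv wS; rewrite lee_fin.
  apply: exp_util_fin_le_truthful_low => // j; case: (eqVneq j i) => [->|ji].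
    by rewrite wv ?others ?eqxx //; exact: le_trans viL (ltW Lrho).
  move: (wS j); rewrite others ji /= in_itv => /(_ isT) /andP[_ wjL].
  exact: ltW (lt_trans wjL Lrho).
- have FS := conull F _ (measurable_itv _) FH1.
  have [k0 [k0i ak0]] : exists k0, k0 != i /\ alpha k0 = 1.
    by case: (eqVneq j1 i) => [j1i|]; [exists k1; rewrite -j1i eq_sym | exists j1].
  apply: iter_int_le (measurable_itv _) FS _ => w _ wS; rewrite lee_fin.
  apply: (exp_util_fin_le_truthful_high _ _ _ _ k0i) => //; first exact: ltn_trans T1.
  move: (wS k0); rewrite others k0i /= in_itv /= andbT => /(_ isT).
  exact: lt_le_trans rhoH.
Qed.
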